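(* Assume that the success probabilities $Q_a$, $a\in\mathcal{A}$, are pairwise distinct. Then there exists an optimal threshold-type age-dependent policy $\phi^*$ of the MDP $\Lambda$ whose action order $(b_1,\dots,b_K)$ satisfies, for every $1\le k<K$, $$b_{k+1}\in\arg\min_{a\in\mathcal{A}:\,Q_a>Q_{b_k}}\ \gamma_{b_k,a},\qquad \gamma_{b_k,a}=\frac{E_a-E_{b_k}}{Q_a-Q_{b_k}}.$$
   Context: Fix $N\in\mathbb{N}^+$ vehicle types $\mathcal{N}=\{1,\dots,N\}$ with arrival probabilities $p_n\in(0,1]$, mean operational costs $c_n\ge0$ and mean sensing capabilities $r_n\in(0,1]$. Fix $\beta\in(0,1)$, $\epsilon>0$. Actions: $\mathcal{A}=2^{\mathcal{N}}$. Success probability $Q_\emptyset=0$, $Q_a=1-\prod_{n\in a}(1-r_np_n)$; expected recruitment cost $E_a=\sum_{n\in a}p_nc_n$. The marginal cost-effectiveness of changing from action $a_i$ to $a_j$ (with $Q_{a_j}\ne Q_{a_i}$) is $\gamma_{a_i,a_j}=(E_{a_j}-E_{a_i})/(Q_{a_j}-Q_{a_i})$. Immediate cost at state $\delta\in\mathbb{N}^+$: $u(\delta,a)=(1-\beta)E_a-\beta\epsilon\big(Q_a(\delta^2+2\delta)-(1+\delta)^2\big)$. MDP $\Lambda$: states $\mathbb{N}^+$; from state $s$ under action $a$ move to $1$ w.p. $Q_a$ and to $s+1$ w.p. $1-Q_a$; average cost $V(\phi)=\limsup_{T\to\infty}\frac1T\mathbb{E}^\phi[\sum_{t=1}^Tu(S(t),A(t))]$,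 $S(1)=1$, to be minimized. A threshold-type age-dependent policy is a deterministic stationary policy $\phi:\mathbb{N}^+\to\mathcal{A}$ for which there are $K\in\mathbb{N}^+$, an action order $(b_1,\dots,b_K)$ with $b_k\ne b_{k+1}$, and integer thresholds $1\le\theta_{b_1\to b_2}\le\dots\le\theta_{b_{K-1}\to b_K}$ such that $\phi(s)=b_k$ for $\theta_{b_{k-1}\to b_k}\le s<\theta_{b_k\to b_{k+1}}$ (conventions $\theta_{b_0\to b_1}=1$, $\theta_{b_K\to b_{K+1}}=\infty$). *)

From HB Require Import structures.
From mathcomp Require Import all_boot all_order all_algebra.
From mathcomp Require Import all_classical all_reals.
From mathcomp Require Import ereal topology normedtype sequences.
Set Implicit Arguments. Unset Strict Implicit. Unset Printing Implicit Defensive.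
Import Order.TTheory GRing.Theory Num.Theory.
Local Open Scope ring_scope.

Section Model.
Variables (R : realType) (N : nat).
(* vehicle types are 'I_N (type n+1 in the paper is index n);
   actions are subsets of the vehicle types *)
Notation act := {set 'I_N}.
Variables (p c r : 'I_N -> R) (beta eps : R).

Definition Qa (a : act) : R := 1 - \prod_(n in a) (1 - r n * p n).
Definition Ea (a : act) : R := \sum_(n in a) p n * c n.
Definition gamma (ai aj : act) : R := (Ea aj - Ea ai) / (Qa aj - Qa ai).

Definition ucost (d : nat) (a : act) : R :=
  (1 - beta) * Ea a
  - beta * eps * (Qa a * (d%:R ^+ 2 + 2 * d%:R) - (1 + d%:R) ^+ 2).

(* General (history-dependent, randomized) policies: given the history
   (past states and actions, in order) and the current state, a probability
   distribution over actions. *)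
Definition history := seq (nat * act).
Definition policy := history -> nat -> act -> R.
Definition is_policy (pi : policy) : Prop :=
  forall h s, (forall a, 0 <= pi h s a) /\ \sum_(a : act) pi h s a = 1.

(* expected total cost over the next T steps from history h, current state s:
   from s under a go to 1 w.p. Q_a and to s+1 w.p. 1 - Q_a *)
Fixpoint Jcost (pi : policy) (T : nat) (h : history) (s : nat) : R :=
  match T with
  | 0 => 0
  | T'.+1 => \sum_(a : act) pi h s a *
      (ucost s a + Qa a * Jcost pi T' (rcons h (s, a)) 1
                 + (1 - Qa a) * Jcost pi T' (rcons h (s, a)) s.+1)
  end.

Definition Vavg (pi : policy) : \bar R :=
  limn_esup (fun T : nat => ((Jcost pi T.+1 [::] 1) / T.+1%:R)%:E).

Definition det_policy (phi : nat -> act) : policy :=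
  fun _ s a => (a == phi s)%:R.

(* phi is a threshold-type age-dependent policy with K actions, action order
   b 1, ..., b K and thresholds th 1 <= ... <= th (K-1) (convention th 0 = 1,
   th K = infinity). *)
Definition threshold_with (phi : nat -> act) (K : nat) (b : nat -> act)
    (th : nat -> nat) : Prop :=
  [/\ (1 <= K)%N,
      th 0 = 1%N,
      (forall k, (1 <= k < K)%N -> b k != b k.+1),
      (forall k, (k.+1 < K)%N -> (th k <= th k.+1)%N) &
      (forall k s, (1 <= k <= K)%N -> (1 <= s)%N ->
         (th k.-1 <= s)%N -> (k = K \/ (s < th k)%N) -> phi s = b k)].

Definition optimal (phi : nat -> act) : Prop :=
  forall pi : policy, is_policy pi -> (Vavg (det_policy phi) <= Vavg pi)%E.

End Model.

(* Writing [y s = h s + D (s^2 - 1)] with [D = beta eps] and [al = 1 - beta], the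
   average-cost optimality equation becomes
     [y s = D s^2 - g + min_a (al E_a + (1 - Q_a) y (s + 1))],
   a recursion through the lower envelope of the lines [t |-> al E_a + (1 - Q_a) t].
   For large [s] the action of largest [Q] attains the minimum, and the recursion
   has an explicit quadratic solution; solving backwards from it gives a candidate
   [y] for every [g], and since the envelope is 1-Lipschitz the intermediate value
   theorem provides [g] with [y 1 = 0].  A verification argument shows that [g] is
   the optimal average cost and that the greedy policy is optimal.  As [y] is
   nondecreasing and unbounded, the greedy action moves along the lower envelope:
   from [b] the next optimal line is the [a] with [Q_a > Q_b] whose crossing level
   [al gamma_{b,a}] is smallest, which gives both the thresholds and the action
   order. *)

From HB Require Import structures.
From mathcomp Require Import all_boot all_order all_algebra.
From mathcomp Require Import all_classical all_reals.
From mathcomp Require Import ereal topology normedtype sequences.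
From mathcomp Require Import ring lra.
Set Implicit Arguments. Unset Strict Implicit. Unset Printing Implicit Defensive.
Import Order.TTheory GRing.Theory Num.Theory numFieldNormedType.Exports.
Local Open Scope ring_scope.

Section RealAnalysis.
Variable R : realType.
Implicit Types (v J L : nat -> R) (x g K c : R).

Lemma limn_esup_le_eventually v x :
  (forall e, 0 < e -> exists n0, forall n, (n0 <= n)%N -> v n <= x + e) ->
  (limn_esup (fun n => (v n)%:E) <= x%:E)%E.
Proof.
move=> v_le; apply/lee_addgt0Pr => e e0; rewrite limn_esup_lim.
apply: lime_le; first exact: is_cvg_esups.
have [n0 le_n0] := v_le e e0.
exists n0 => // n /= n0n; apply: ge_ereal_sup => _ [k /= nk <-].
by rewrite lee_fin le_n0 // (leq_trans n0n nk).
Qed.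

Lemma limn_esup_ge_frequently v x :
  (forall e, 0 < e -> forall n0, exists2 n, (n0 <= n)%N & x - e <= v n) ->
  (x%:E <= limn_esup (fun n => (v n)%:E))%E.
Proof.
move=> v_ge; rewrite limn_esup_lim; apply: lime_ge; first exact: is_cvg_esups.
apply: nearW => n; apply/lee_subgt0Pr => e e0.
have [k nk ge_k] := v_ge e e0 n.
apply: le_ereal_sup_tmp; exists (v k)%:E; first by exists k.
by rewrite -EFinB lee_fin.
Qed.

(* Were [J n / n] to stay below [g - e], the hypothesis would make [L] grow
   linearly and hence [J] superlinearly. *)
Lemma limn_esup_avg_ge J L g K c : 0 < K ->
  (forall n, J n.+1 = J n + L n) ->
  (forall n, n.+1%:R * g + c <= J n.+1 + K * L n) ->
  (g%:E <= limn_esup (fun n => (J n.+1 / n.+1%:R)%:E))%E.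
Proof.
move=> K_gt0 JS JL; apply: limn_esup_ge_frequently => e e0 n0.
apply/not_exists2P => avg_lt; pose s := g - e + 1.
have J_lt n : (n0 <= n)%N -> J n.+1 < (g - e) * n.+1%:R.
  by move=> n0n; rewrite ltNge -ler_pdivlMr //; apply/negP => ge; case: (avg_lt n).
have [n1 L_ge] : exists n1, forall n, (n1 <= n)%N -> s <= L n.
  have [m _ m_le] := nbhs_infty_gtr ((K * s - c) / e).
  exists (maxn n0 m) => n; rewrite geq_max => /andP[n0n mn].
  have := m_le n.+1 (leqW mn); rewrite ltr_pdivrMr // => lt_n.
  have := JL n; have := J_lt n n0n => Jn JLn.
  by rewrite -(ler_pM2l K_gt0); nra.
have J_grow m : J n1 + m%:R * s <= J (n1 + m)%N.
  elim: m => [|m IH]; first by rewrite addn0 mul0r addr0.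
  by rewrite addnS JS -natr1; have := L_ge (n1 + m)%N (leq_addr _ _); lra.
have [m0 _ m0_gt] := nbhs_infty_gtr `|(g - e) * n1%:R - J n1|.
pose m := maxn n0 m0.
have := J_lt (n1 + m)%N (leq_trans (leq_maxl _ _) (leq_addl _ _)).
have := J_grow m.+1; rewrite addnS => grow lt.
have := m0_gt m (leq_maxr _ _); have := ler_norm ((g - e) * n1%:R - J n1).
rewrite -natr1 in grow; rewrite -natr1 natrD in lt; rewrite /s in grow; nra.
Qed.

Lemma bounds_from_tail (f up : nat -> R) n lo : (forall s, 0 <= up s) ->
  (forall s, (n <= s)%N -> lo <= f s <= up s) ->
  exists m M, forall s, m <= f s <= up s + M.
Proof.
move=> up_ge0 tail; pose S := \sum_(i < n) `|f i|.
have S_ge0 : 0 <= S by apply: sumr_ge0 => i _; apply: normr_ge0.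
exists (- S - `|lo|), S => s; have := normr_ge0 lo; have := up_ge0 s.
case: (ltnP s n) => [s_lt|/tail /andP[lo_le le_up]].
  have : `|f s| <= S by rewrite /S (bigD1 (Ordinal s_lt)) //= lerDl sumr_ge0.
  by rewrite ler_norml; lra.
by have := ler_norm (- lo); rewrite normrN; lra.
Qed.

Lemma natr_le_sqr n : n%:R <= n%:R ^+ 2 :> R.
Proof. by case: n => [|n]; [exact: sqr_ge0 | rewrite expr2 ler_peMl ?ler1n]. Qed.

Lemma lipschitz_continuous (f : R -> R) k : 0 < k ->
  (forall x y, `|f x - f y| <= k * `|x - y|) -> continuous f.
Proof.
move=> k_gt0 f_lip x; apply/cvgrPdist_lt => e e0.
apply/nbhs_ballP; exists (e / k); first exact: divr_gt0.
move=> y; rewrite /ball /= => xy.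
by apply: le_lt_trans (f_lip x y) _; rewrite mulrC -ltr_pdivlMr.
Qed.

End RealAnalysis.

Section Verification.
Variables (R : realType) (N : nat) (p c r : 'I_N -> R) (beta eps : R).
Local Notation act := {set 'I_N}.
Local Notation Q := (Qa p r).
Local Notation u := (ucost p c r beta eps).
Local Notation J := (Jcost p c r beta eps).
Implicit Types (pi : policy R N) (f : history N -> nat -> R) (phi : nat -> act).

Lemma policy_ge0 pi hi s a : is_policy pi -> 0 <= pi hi s a.
Proof. by move=> /(_ hi s) [->]. Qed.

Lemma sum_policy_const pi hi s (x : R) : is_policy pi ->
  \sum_(a : act) pi hi s a * x = x.
Proof. by move=> /(_ hi s) [_ pi1]; rewrite -big_distrl /= pi1 mul1r. Qed.

Lemma sum_det_policy phi hi s (F : act -> R) :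
  \sum_(a : act) det_policy R phi hi s a * F a = F (phi s).
Proof.
rewrite (bigD1 (phi s)) //= /det_policy eqxx mul1r big1 ?addr0 // => a.
by move/negbTE ->; rewrite mul0r.
Qed.

Lemma det_policyP phi : is_policy (det_policy R phi).
Proof.
move=> hi s; split=> [a|]; first by rewrite /det_policy ler0n.
by rewrite -(sum_det_policy phi hi s (fun=> 1)); apply: eq_bigr => a _; rewrite mulr1.
Qed.

(* [iter T (transition pi) f hi s] is the expected value of [f] after [T] steps
   of [pi] started from history [hi] in state [s]. *)
Definition transition pi f : history N -> nat -> R := fun hi s =>
  \sum_(a : act) pi hi s a *
    (Q a * f (rcons hi (s, a)) 1 + (1 - Q a) * f (rcons hi (s, a)) s.+1).

Definition stage_cost pi : history N -> nat -> R := fun hi s =>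
  \sum_(a : act) pi hi s a * u s a.

Lemma transition_det phi f hi s : transition (det_policy R phi) f hi s =
  Q (phi s) * f (rcons hi (s, phi s)) 1 + (1 - Q (phi s)) * f (rcons hi (s, phi s)) s.+1.
Proof. exact: sum_det_policy. Qed.

Lemma JcostS pi T hi s :
  J pi T.+1 hi s = stage_cost pi hi s + transition pi (J pi T) hi s.
Proof.
by rewrite /= /stage_cost /transition -big_split; apply: eq_bigr => a _ /=; ring.
Qed.

Lemma transitionD pi f1 f2 hi s :
  transition pi (fun hi s => f1 hi s + f2 hi s) hi s
  = transition pi f1 hi s + transition pi f2 hi s.
Proof. by rewrite /transition -big_split; apply: eq_bigr => a _ /=; ring. Qed.

Lemma Jcost_succ pi T hi s :
  J pi T.+1 hi s = J pi T hi s + iter T (transition pi) (stage_cost pi) hi s.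
Proof.
elim: T hi s => [|T IH] hi s.
  rewrite JcostS /transition big1 => [|a _]; last by rewrite /= !(mulr0, addr0).
  by rewrite /= add0r addr0.
rewrite JcostS [J pi T.+1 hi s]JcostS iterS -addrA -transitionD; congr (_ + _).
by congr transition; apply/funext => hi'; apply/funext => s'; exact: IH.
Qed.

Hypothesis Q01 : forall a, 0 <= Q a <= 1.

Lemma transition_ge pi f x : is_policy pi -> (forall hi s, x <= f hi s) ->
  forall hi s, x <= transition pi f hi s.
Proof.
move=> pi_pol f_ge hi s; rewrite -[leLHS](sum_policy_const hi s x pi_pol).
apply: ler_sum => a _; apply: ler_wpM2l; first exact: policy_ge0.
have := f_ge (rcons hi (s, a)) 1; have := f_ge (rcons hi (s, a)) s.+1.
have := Q01 a; nra.
Qed.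

Lemma transition_le_affine pi f1 f2 K C : is_policy pi ->
  (forall hi s, f1 hi s <= K * f2 hi s + C) ->
  forall hi s, transition pi f1 hi s <= K * transition pi f2 hi s + C.
Proof.
move=> pi_pol f_le hi s; rewrite /transition mulr_sumr.
rewrite -[X in _ + X](sum_policy_const hi s C pi_pol) -big_split /=.
apply: ler_sum => a _; rewrite mulrCA -mulrDr; apply: ler_wpM2l.
  exact: policy_ge0.
have := f_le (rcons hi (s, a)) 1; have := f_le (rcons hi (s, a)) s.+1.
have := Q01 a; nra.
Qed.

Lemma iter_transition_ge pi f x T : is_policy pi -> (forall hi s, x <= f hi s) ->
  forall hi s, x <= iter T (transition pi) f hi s.
Proof. by move=> pi_pol f_ge; elim: T => //= T IH; apply: transition_ge. Qed.

Lemma iter_transition_le_affine pi f1 f2 K C T : is_policy pi ->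
  (forall hi s, f1 hi s <= K * f2 hi s + C) ->
  forall hi s, iter T (transition pi) f1 hi s <= K * iter T (transition pi) f2 hi s + C.
Proof. by move=> pi_pol f_le; elim: T => //= T IH; apply: transition_le_affine. Qed.

Variables (g : R) (h : nat -> R).
Local Notation hf := (fun (_ : history N) s => h s).

Lemma Jcost_ge pi : is_policy pi ->
  (forall s a, g + h s <= u s a + Q a * h 1%N + (1 - Q a) * h s.+1) ->
  forall T hi s, T%:R * g + h s <= J pi T hi s + iter T (transition pi) hf hi s.
Proof.
move=> pi_pol sub; elim=> [|T IH] hi s; first by rewrite mul0r !add0r.
rewrite JcostS iterS /stage_cost /transition -!big_split /=.
rewrite -[leLHS](sum_policy_const hi s _ pi_pol); apply: ler_sum => a _.
rewrite -!mulrDr; apply: ler_wpM2l; first exact: policy_ge0.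
have := IH (rcons hi (s, a)) 1; have := IH (rcons hi (s, a)) s.+1.
have := sub s a; have := Q01 a; rewrite -natr1; nra.
Qed.

Lemma Jcost_det phi :
  (forall s, (1 <= s)%N ->
     g + h s = u s (phi s) + Q (phi s) * h 1%N + (1 - Q (phi s)) * h s.+1) ->
  forall T hi s, (1 <= s)%N ->
  J (det_policy R phi) T hi s + iter T (transition (det_policy R phi)) hf hi s
  = T%:R * g + h s.
Proof.
move=> opt; elim=> [|T IH] hi s s_ge1; first by rewrite mul0r !add0r.
rewrite JcostS iterS -addrA -transitionD transition_det /stage_cost sum_det_policy.
have -> : T.+1%:R * g + h s = T%:R * g + (g + h s) by rewrite -natr1; ring.
by rewrite !IH ?(leqnn, ltnW s_ge1) // opt //; ring.
Qed.

Lemma Vavg_det_le phi hmin :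
  (forall s, (1 <= s)%N ->
     g + h s = u s (phi s) + Q (phi s) * h 1%N + (1 - Q (phi s)) * h s.+1) ->
  (forall s, hmin <= h s) ->
  (Vavg p c r beta eps (det_policy R phi) <= g%:E)%E.
Proof.
move=> opt h_ge; apply: limn_esup_le_eventually => e e0.
have [n0 _ n0_gt] := nbhs_infty_gtr ((h 1%N - hmin) / e).
exists n0 => n n0n; rewrite ler_pdivrMr //.
have := Jcost_det opt n.+1 [::] (leqnn 1).
have := iter_transition_ge n.+1 (det_policyP phi) (fun _ => h_ge) [::] 1.
have := n0_gt n.+1 (leqW n0n); rewrite ltr_pdivrMr //; nra.
Qed.

Lemma Vavg_ge pi K C : is_policy pi -> 0 < K ->
  (forall s a, g + h s <= u s a + Q a * h 1%N + (1 - Q a) * h s.+1) ->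
  (forall s a, Q a * h 1%N + (1 - Q a) * h s.+1 <= K * u s a + C) ->
  (g%:E <= Vavg p c r beta eps pi)%E.
Proof.
move=> pi_pol K_gt0 sub h_le.
have step_le hi s : transition pi hf hi s <= K * stage_cost pi hi s + C.
  rewrite /stage_cost mulr_sumr -[X in _ + X](sum_policy_const hi s C pi_pol).
  rewrite -big_split; apply: ler_sum => a _ /=.
  by rewrite mulrCA -mulrDr ler_wpM2l ?policy_ge0.
apply: (@limn_esup_avg_ge R (fun n => J pi n [::] 1)
    (fun n => iter n (transition pi) (stage_cost pi) [::] 1) g K (h 1%N - C) K_gt0)
  => [n|n]; first exact: Jcost_succ.
have := Jcost_ge pi_pol sub n.+1 [::] 1; rewrite iterSr.
have := iter_transition_le_affine n pi_pol step_le [::] 1; lra.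
Qed.

Lemma optimal_of_bellman phi hmin K C : 0 < K ->
  (forall s, hmin <= h s) ->
  (forall s a, g + h s <= u s a + Q a * h 1%N + (1 - Q a) * h s.+1) ->
  (forall s, (1 <= s)%N ->
     g + h s = u s (phi s) + Q (phi s) * h 1%N + (1 - Q (phi s)) * h s.+1) ->
  (forall s a, Q a * h 1%N + (1 - Q a) * h s.+1 <= K * u s a + C) ->
  optimal p c r beta eps phi.
Proof.
move=> K_gt0 h_ge sub opt h_le pi pi_pol.
exact: le_trans (Vavg_det_le opt h_ge) (Vavg_ge pi_pol K_gt0 sub h_le).
Qed.

End Verification.

Section LowerEnvelope.
Variables (R : realType) (N : nat) (p c r : 'I_N -> R) (al : R).
Local Notation act := {set 'I_N}.
Local Notation Q := (Qa p r).
Local Notation E := (Ea p c).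
Local Notation gam := (gamma p c r).
Implicit Types (a b : act) (t : R).

Definition line a t := al * E a + (1 - Q a) * t.

Definition argmin_line t : act := Order.arg_min [set: 'I_N]%SET xpredT (line^~ t).

Definition envelope t := line (argmin_line t) t.

Definition line_minimal b t := forall a, line b t <= line a t.

Lemma argmin_line_minimal t : line_minimal (argmin_line t) t.
Proof. by rewrite /argmin_line; case: arg_minP => //= b _ b_min a; apply: b_min. Qed.

Lemma envelope_le a t : envelope t <= line a t.
Proof. exact: argmin_line_minimal. Qed.

Hypothesis Q01 : forall a, 0 <= Q a <= 1.

Lemma line_le2r a t1 t2 : t1 <= t2 -> line a t1 <= line a t2.
Proof. by move=> t12; rewrite lerD2l ler_wpM2l // subr_ge0; case/andP: (Q01 a). Qed.

Lemma envelope_mono t1 t2 : t1 <= t2 -> envelope t1 <= envelope t2.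
Proof. by move=> t12; apply: le_trans (envelope_le _ t1) (line_le2r _ t12). Qed.

Lemma envelope_lipschitz t1 t2 : `|envelope t1 - envelope t2| <= `|t1 - t2|.
Proof.
wlog le12 : t1 t2 / t1 <= t2.
  by move=> wlog; case: (leP t1 t2) => [|/ltW] /wlog //; rewrite distrC (distrC t1).
rewrite distrC (distrC t1) !ger0_norm ?subr_ge0 ?envelope_mono //.
have := envelope_le (argmin_line t1) t2; rewrite /envelope /line.
by have := Q01 (argmin_line t1); nra.
Qed.

Hypotheses (al_ge0 : 0 <= al) (E_ge0 : forall a, 0 <= E a).

Lemma envelope_ge0 t : 0 <= t -> 0 <= envelope t.
Proof.
move=> t_ge0; rewrite /envelope /line; set b := argmin_line t.
by rewrite addr_ge0 ?mulr_ge0 // subr_ge0; case/andP: (Q01 b).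
Qed.

Hypothesis Qinj : injective Q.

(* When a minimal line is followed to the right, a line of smaller success
   probability never overtakes it, and a line [a] of larger success
   probability overtakes it at the level [al * gam b a]. *)
Lemma line_minimal_up b t0 t : line_minimal b t0 -> t0 <= t ->
  (forall a, Q b < Q a -> t <= al * gam b a) -> line_minimal b t.
Proof.
move=> b_min t0t gam_ge a; have := b_min a; rewrite /line.
case: (ltgtP (Q a) (Q b)) => [Qab|Qba|/Qinj-> //]; first by nra.
move: (gam_ge a Qba); rewrite /gamma mulrA ler_pdivlMr ?subr_gt0 //; nra.
Qed.

Definition next_action b : act :=
  if [pick a | Q b < Q a] is Some a0
  then Order.arg_min a0 (fun a => Q b < Q a) (gam b) else b.

Lemma next_actionP b a0 : Q b < Q a0 ->
  Q b < Q (next_action b) /\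
  forall a, Q b < Q a -> gam b (next_action b) <= gam b a.
Proof.
move=> Qba0; rewrite /next_action; case: pickP => [a1 Qba1|/(_ a0)]; last by rewrite Qba0.
by case: arg_minP => [|b' Qbb' b'_min]; last split=> // a /b'_min.
Qed.

Lemma line_minimal_next b t0 a0 : line_minimal b t0 -> Q b < Q a0 ->
  t0 <= al * gam b (next_action b) /\
  line_minimal (next_action b) (al * gam b (next_action b)).
Proof.
move=> b_min Qba0; have [Qb_lt gam_min] := next_actionP Qba0.
set b' := next_action b; set t := al * gam b b'.
have dQ_gt0 : 0 < Q b' - Q b by rewrite subr_gt0.
have tdQ : t * (Q b' - Q b) = al * (E b' - E b).
  by rewrite /t /gamma mulrA divfK // gt_eqF.
have t0_le : t0 <= t.
  by rewrite -(ler_pM2r dQ_gt0) tdQ; have := b_min b'; rewrite /line; nra.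
split=> // a; have b_min_t : line_minimal b t.
  by apply: (line_minimal_up b_min t0_le) => a' /gam_min; apply: ler_wpM2l.
suff <- : line b t = line b' t by apply: b_min_t.
by rewrite /line; nra.
Qed.

Section ThresholdPolicy.
Variable yy : nat -> R.
Hypotheses (yy_nd : nondecreasing_seq yy)
  (yy_unbounded : forall t, exists2 s, (1 <= s)%N & t <= yy s.+1).

Definition top_action b := [forall a, Q a <= Q b].

Lemma not_top_actionP b : reflect (exists a, Q b < Q a) (~~ top_action b).
Proof.
rewrite negb_forall; apply: (iffP existsP) => -[a].
  by rewrite -ltNge; exists a.
by rewrite ltNge; exists a.
Qed.

(* The action in state [s] has to minimize the lines at level [yy s.+1]; the
   chain starts from a minimizer for state 1. *)
Definition chain j := iter j next_action (argmin_line (yy 2)).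

(* The chain is strictly increasing in [Q] until it reaches a top action, so
   it reaches one within [#|act|] steps. *)
Lemma chain_reaches_top : exists j, top_action (chain j).
Proof.
apply/not_existsP => not_top.
have chain_lt j : Q (chain j) < Q (chain j.+1).
  have /not_top_actionP[a0 Qa0] : ~~ top_action (chain j) by apply/negP.
  exact: (next_actionP Qa0).1.
have chain_mono : {homo (fun j => Q (chain j)) : i j / (i < j)%N >-> i < j}.
  by apply: (@homo_ltn _ _ (fun x y : R => x < y)) => // y x z; apply: lt_trans.
set n := #|{: act}|.
have chain_inj : injective (fun j : 'I_n.+1 => chain j).
  move=> i j /(congr1 Q) eqQ; apply/val_inj/eqP; rewrite eqn_leq.
  by apply/andP; split; rewrite leqNgt; apply/negP => /chain_mono; rewrite eqQ ltxx.
by have := leq_card _ chain_inj; rewrite card_ord /n ltnn.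
Qed.

Definition top_index := ex_minn chain_reaches_top.

Lemma top_index_top : top_action (chain top_index).
Proof. by rewrite /top_index; case: ex_minnP. Qed.

Lemma lt_top_index j : (j < top_index)%N -> exists a, Q (chain j) < Q a.
Proof.
rewrite /top_index; case: ex_minnP => j0 _ j0_min jj0; apply/not_top_actionP.
by apply/negP => /j0_min; rewrite leqNgt jj0.
Qed.

Definition breakpoint j :=
  if j is j'.+1 then al * gam (chain j') (chain j) else yy 2.

Lemma chain_minimal j : (j <= top_index)%N -> line_minimal (chain j) (breakpoint j).
Proof.
elim: j => [_|j IH j_lt]; first exact: argmin_line_minimal.
have [a0 Qa0] := lt_top_index j_lt.
exact: (line_minimal_next (IH (ltnW j_lt)) Qa0).2.
Qed.

Lemma breakpoint_le j : (j < top_index)%N -> breakpoint j <= breakpoint j.+1.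
Proof.
move=> j_lt; have [a0 Qa0] := lt_top_index j_lt.
exact: (line_minimal_next (chain_minimal (ltnW j_lt)) Qa0).1.
Qed.

Lemma breakpoint_mono i j : (i <= j)%N -> (j <= top_index)%N ->
  breakpoint i <= breakpoint j.
Proof.
move=> /subnKC <-; elim: (j - i)%N => [|k IH]; rewrite ?addn0 // addnS => k_lt.
exact: le_trans (IH (ltnW k_lt)) (breakpoint_le k_lt).
Qed.

(* [segment s] is the number of breakpoints passed by the level [yy s.+1]. *)
Definition segment s :=
  find (fun j => yy s.+1 < breakpoint j.+1) (iota 0 top_index).

Definition chain_policy s := chain (segment s).

Lemma segment_le s : (segment s <= top_index)%N.
Proof. by rewrite /segment (leq_trans (find_size _ _)) ?size_iota. Qed.

Lemma breakpoint_segment_le s : (1 <= s)%N -> breakpoint (segment s) <= yy s.+1.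
Proof.
move=> s_ge1; case def_j: (segment s) => [|j] /=; first exact: yy_nd.
have /(before_find 0%N) : (j < segment s)%N by rewrite def_j.
rewrite nth_iota ?add0n; last by have := segment_le s; rewrite def_j.
by move/negbT; rewrite -leNgt.
Qed.

Lemma lt_breakpoint_segment s : (segment s < top_index)%N ->
  yy s.+1 < breakpoint (segment s).+1.
Proof.
move=> seg_lt; have : has (fun j => yy s.+1 < breakpoint j.+1) (iota 0 top_index).
  by rewrite has_find size_iota.
by move/(nth_find 0%N); rewrite nth_iota ?add0n.
Qed.

Lemma chain_policy_minimal s : (1 <= s)%N -> line_minimal (chain_policy s) (yy s.+1).
Proof.
move=> s_ge1; apply: (line_minimal_up (chain_minimal (segment_le s))).
  exact: breakpoint_segment_le.
move=> a Qa; case: (ltnP (segment s) top_index) => [seg_lt|seg_ge].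
  apply: ltW; apply: lt_le_trans (lt_breakpoint_segment seg_lt) _.
  by have [_ /(_ a Qa)] := next_actionP Qa; apply: ler_wpM2l.
have /eqP seg_top : segment s == top_index by rewrite eqn_leq seg_ge segment_le.
by move: Qa; rewrite /chain_policy seg_top ltNge; move/forallP: top_index_top ->.
Qed.

Lemma segmentE s j : (j <= top_index)%N -> breakpoint j <= yy s.+1 ->
  (j = top_index \/ yy s.+1 < breakpoint j.+1) -> segment s = j.
Proof.
move=> j_le bj_le j_last; apply/eqP; rewrite eqn_leq; apply/andP; split.
  case: j_last => [->|yy_lt]; first exact: segment_le.
  rewrite leqNgt; apply/negP => /[dup] lt_seg /(before_find 0%N).
  by rewrite nth_iota ?add0n ?yy_lt // (leq_trans lt_seg (segment_le s)).
rewrite leqNgt; apply/negP => seg_lt.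
have := lt_breakpoint_segment (leq_trans seg_lt j_le).
by have := breakpoint_mono seg_lt j_le; rewrite ltNge => /le_trans ->.
Qed.

Lemma exists_switch_state k : exists s, (0 < s)%N && (breakpoint k <= yy s.+1).
Proof.
by have [s s_ge1 le_s] := yy_unbounded (breakpoint k); exists s; rewrite s_ge1.
Qed.

(* The first state from which [chain k] (action number [k.+1] of the policy)
   is used. *)
Definition switch_state k := if k is 0 then 1%N else ex_minn (exists_switch_state k).

Lemma switch_stateP k : (0 < k)%N ->
  [/\ (0 < switch_state k)%N, breakpoint k <= yy (switch_state k).+1 &
      forall s, (0 < s)%N -> breakpoint k <= yy s.+1 -> (switch_state k <= s)%N].
Proof.
case: k => [|k] // _; rewrite /switch_state; case: ex_minnP => s /andP[s_gt0 le_s] s_min.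
by split=> // s' s'_gt0 le_s'; apply: s_min; rewrite s'_gt0.
Qed.

Lemma chain_policy_threshold :
  threshold_with chain_policy top_index.+1 (fun k => chain k.-1) switch_state.
Proof.
split=> //.
- case=> [|k] //= k_lt; apply/eqP => eq_next.
  have [a0 /next_actionP[+ _]] := lt_top_index k_lt.
  by move: eq_next => /(congr1 Q) ->; rewrite ltxx.
- case=> [|k] k_lt; first by case: (switch_stateP (ltn0Sn 0)).
  have [_ le2 _] := switch_stateP (ltn0Sn k.+1).
  have [_ _ sk_min] := switch_stateP (ltn0Sn k).
  apply: sk_min; first by case: (switch_stateP (ltn0Sn k.+1)).
  exact: le_trans (breakpoint_le (k_lt : (k.+1 < top_index)%N)) le2.
- move=> k s /andP[k_gt0 k_le] s_gt0 th_le s_lt.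
  rewrite /chain_policy; congr chain; apply: segmentE.
  + by rewrite -ltnS prednK.
  + case: (k.-1) th_le => [|j] th_le.
      by rewrite /=; apply: yy_nd; rewrite ltnS.
    have [_ le_j _] := switch_stateP (ltn0Sn j).
    by apply: le_trans le_j _; apply: yy_nd.
  + case: s_lt => [->|s_lt]; [by left|right]; rewrite prednK //.
    have [_ _ sk_min] := switch_stateP k_gt0.
    by rewrite ltNge; apply/negP => /(sk_min s s_gt0); rewrite leqNgt s_lt.
Qed.

Lemma chain_gamma k : (1 <= k < top_index.+1)%N ->
  Q (chain k.-1) < Q (chain k) /\
  forall a, Q (chain k.-1) < Q a -> gam (chain k.-1) (chain k) <= gam (chain k.-1) a.
Proof.
case: k => [|k] // /andP[_ k_lt].
by have [a0 Qa0] := lt_top_index k_lt; exact: next_actionP Qa0.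
Qed.

End ThresholdPolicy.

End LowerEnvelope.

Section OptimalThresholdPolicy.
Variables (R : realType) (N : nat) (p c r : 'I_N -> R) (beta eps : R).
Hypotheses (N_gt0 : (0 < N)%N) (p_bd : forall n, 0 < p n <= 1)
  (c_ge0 : forall n, 0 <= c n) (r_bd : forall n, 0 < r n <= 1)
  (beta_bd : 0 < beta < 1) (eps_gt0 : 0 < eps)
  (Qinj : injective (Qa p r)).
Local Notation act := {set 'I_N}.
Local Notation Q := (Qa p r).
Local Notation E := (Ea p c).
Local Notation u := (ucost p c r beta eps).
Local Notation al := (1 - beta).
Local Notation D := (beta * eps).
Local Notation v := (line p c r al).
Local Notation m := (envelope p c r al).
Implicit Types (a : act) (g t : R) (s k : nat).

Lemma Qa_bounds a : 0 <= Q a <= 1.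
Proof.
have rp_bd n : 0 <= 1 - r n * p n <= 1.
  by case/andP: (p_bd n) => ? ?; case/andP: (r_bd n) => ? ?; nra.
apply/andP; split; first by rewrite subr_ge0 prodr_ile1 // => n _; apply: rp_bd.
by rewrite lerBlDr lerDl prodr_ge0 // => n _; case/andP: (rp_bd n).
Qed.

Lemma Ea_ge0 a : 0 <= E a.
Proof.
by rewrite sumr_ge0 // => n _; rewrite mulr_ge0 // ltW //; case/andP: (p_bd n).
Qed.

Lemma al_gt0 : 0 < al. Proof. by rewrite subr_gt0; case/andP: beta_bd. Qed.

Lemma D_gt0 : 0 < D. Proof. by rewrite mulr_gt0 //; case/andP: beta_bd. Qed.

Lemma ucostE s a : u s a = al * E a + D * (Q a + (1 - Q a) * (s%:R + 1) ^+ 2).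
Proof. by rewrite /ucost; ring. Qed.

Lemma ucost_ge s a : D * ((1 - Q a) * s.+1%:R ^+ 2) <= u s a.
Proof.
rewrite ucostE -natr1; have := Ea_ge0 a; have := Qa_bounds a.
by have := al_gt0; have := D_gt0; nra.
Qed.

Definition top : act := Order.arg_max [set: 'I_N]%SET xpredT Q.

Lemma Qa_le_top a : Q a <= Q top.
Proof. by rewrite /top; case: arg_maxP => //= b _; apply. Qed.

Lemma Qa_top_gt0 : 0 < Q top.
Proof.
pose n0 := Ordinal N_gt0; apply: lt_le_trans (Qa_le_top [set n0]).
rewrite /Qa big_set1 subKr mulr_gt0 //.
  by case/andP: (r_bd n0).
by case/andP: (p_bd n0).
Qed.

(* Every other line crosses the line of [top] below this level. *)
Definition top_level := \sum_(a | a != top) `|al * (E top - E a) / (Q top - Q a)|.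

Lemma top_line_minimal t : top_level <= t -> line_minimal p c r al top t.
Proof.
move=> t_ge a; have [->//|a_top] := eqVneq a top.
have Qa_lt : Q a < Q top.
  by rewrite lt_neqAle Qa_le_top andbT; apply: contra_neq a_top => /Qinj.
have : al * (E top - E a) / (Q top - Q a) <= t.
  apply: le_trans (ler_norm _) (le_trans _ t_ge).
  by rewrite /top_level (bigD1 a) //= lerDl sumr_ge0.
by rewrite ler_pdivrMr ?subr_gt0 // /line; nra.
Qed.

(* For large states the relative value [yval] is the quadratic [quad g]: the
   fixed point of [y s = D s^2 - g + v top (y s.+1)] among quadratics. *)
Definition qa := D / Q top.
Definition qb := 2 * (1 - Q top) * qa / Q top.
Definition qc g := (al * E top - g + (1 - Q top) * (qa + qb)) / Q top.
Definition quad g s := qa * s%:R ^+ 2 + qb * s%:R + qc g.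

Lemma qa_gt0 : 0 < qa. Proof. by rewrite divr_gt0 ?D_gt0 ?Qa_top_gt0. Qed.

Lemma qb_ge0 : 0 <= qb.
Proof.
rewrite divr_ge0 ?(ltW Qa_top_gt0) // mulr_ge0 ?(ltW qa_gt0) // mulr_ge0 //.
by rewrite subr_ge0; case/andP: (Qa_bounds top).
Qed.

Lemma D_le_qa : D <= qa.
Proof.
rewrite ler_pdivlMr ?Qa_top_gt0 // ger_pMr ?D_gt0 //.
by case/andP: (Qa_bounds top).
Qed.

Lemma quadE g s : quad g s = D * s%:R ^+ 2 - g + v top (quad g s.+1).
Proof.
have Qtop_neq0 : Q top != 0 by rewrite gt_eqF ?Qa_top_gt0.
by rewrite /quad /line /qc /qb /qa -natr1; field.
Qed.

Lemma quad_le_succ g s : quad g s <= quad g s.+1.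
Proof.
rewrite /quad -natr1; have := qa_gt0; have := qb_ge0.
by have : 0 <= s%:R :> R by []; nra.
Qed.

Lemma quad_ge g s : qa * s%:R + qc g <= quad g s.
Proof.
rewrite /quad; have := qa_gt0; have := qb_ge0; have := natr_le_sqr R s.
by have : 0 <= s%:R :> R by []; nra.
Qed.

Definition gmax := al * E top + qa + qb.

Lemma quad_gmax1 : quad gmax 1 = 0.
Proof.
have Qtop_neq0 : Q top != 0 by rewrite gt_eqF ?Qa_top_gt0.
by rewrite /quad /qc /gmax; field.
Qed.

Lemma qc_ge g : g <= gmax -> - (qa + qb) <= qc g.
Proof.
move=> g_le; rewrite /qc ler_pdivlMr ?Qa_top_gt0 //.
by rewrite /gmax in g_le; lra.
Qed.

Definition horizon := (Num.bound ((top_level + qa + qb) / qa)).+1.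

Lemma top_level_le_quad g s : g <= gmax -> (horizon <= s)%N -> top_level <= quad g s.
Proof.
move=> g_le s_ge; apply: le_trans (quad_ge g s); have := qc_ge g_le.
have top_level_ge0 : 0 <= top_level by apply: sumr_ge0 => a _; apply: normr_ge0.
have : (top_level + qa + qb) / qa < s%:R.
  apply: lt_le_trans (archi_boundP _) _; last by rewrite ler_nat ltnW.
  by rewrite divr_ge0 ?(ltW qa_gt0) // !addr_ge0 ?qb_ge0 ?(ltW qa_gt0).
by rewrite ltr_pdivrMr ?qa_gt0 //; lra.
Qed.

Fixpoint backward g k s :=
  if k is k'.+1 then D * s%:R ^+ 2 - g + m (backward g k' s.+1) else quad g s.

Definition yval g s := backward g (horizon - s) s.

Lemma yval_tail g s : (horizon <= s)%N -> yval g s = quad g s.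
Proof. by rewrite /yval -subn_eq0 => /eqP ->. Qed.

Lemma yval_head g s : (s < horizon)%N ->
  yval g s = D * s%:R ^+ 2 - g + m (yval g s.+1).
Proof. by move=> s_lt; rewrite {1}/yval -(subnSK s_lt). Qed.

Lemma yvalE g s : g <= gmax -> yval g s = D * s%:R ^+ 2 - g + m (yval g s.+1).
Proof.
move=> g_le; case: (ltnP s horizon) => [|s_ge]; first exact: yval_head.
have s1_ge : (horizon <= s.+1)%N := leqW s_ge.
rewrite (yval_tail g s_ge) (yval_tail g s1_ge) quadE; congr (_ + _).
apply: le_anti; apply/andP; split; last exact: envelope_le.
exact: top_line_minimal (top_level_le_quad g_le s1_ge) (argmin_line p c r al _).
Qed.

Lemma yval_le_succ g s : g <= gmax -> yval g s <= yval g s.+1.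
Proof.
move=> g_le; suff tail_le k s' : (horizon <= s' + k)%N -> yval g s' <= yval g s'.+1.
  by apply: (tail_le horizon); rewrite leq_addl.
elim: k s' => [|k IH] s' hs.
  by rewrite addn0 in hs; rewrite !yval_tail ?(leqW hs) //; apply: quad_le_succ.
rewrite [leRHS](yvalE _ g_le) [leLHS](yvalE _ g_le).
have : m (yval g s'.+1) <= m (yval g s'.+2).
  by apply: envelope_mono; [apply: Qa_bounds | apply: IH; rewrite addSnnS].
have : D * s'%:R ^+ 2 <= D * s'.+1%:R ^+ 2.
  by rewrite ler_pM2l ?D_gt0 // ler_sqr ?ler_nat ?nnegrE.
lra.
Qed.

Lemma yval_unbounded g : g <= gmax ->
  forall t, exists2 s, (1 <= s)%N & t <= yval g s.+1.
Proof.
move=> g_le t; have [n0 _ n0_gt] := nbhs_infty_gtr ((t - qc g) / qa).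
exists (maxn 1 (maxn horizon n0)); rewrite ?leq_maxl //; set s := maxn 1 _.
have [hs n0s] : (horizon <= s.+1)%N /\ (n0 <= s.+1)%N.
  by rewrite !leqW // !(leq_trans _ (leq_maxr 1 _)) ?leq_maxl ?leq_maxr.
rewrite yval_tail //; apply: le_trans (quad_ge g s.+1).
by have := n0_gt _ n0s; rewrite ltr_pdivrMr ?qa_gt0 //; lra.
Qed.

Lemma backward_lipschitz g g' k s :
  `|backward g k s - backward g' k s| <= (k%:R + (Q top)^-1) * `|g - g'|.
Proof.
elim: k s => [|k IH] s /=.
  have Qtop_neq0 : Q top != 0 by rewrite gt_eqF ?Qa_top_gt0.
  have -> : quad g s - quad g' s = (g' - g) / Q top by rewrite /quad /qc; field.
  by rewrite add0r normrM normfV (gtr0_norm Qa_top_gt0) distrC mulrC.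
have -> : D * s%:R ^+ 2 - g + m (backward g k s.+1) -
    (D * s%:R ^+ 2 - g' + m (backward g' k s.+1))
  = (g' - g) + (m (backward g k s.+1) - m (backward g' k s.+1)) by ring.
apply: le_trans (ler_normD _ _) _; rewrite distrC -natr1.
have := IH s.+1.
have := @envelope_lipschitz R N p c r al Qa_bounds
  (backward g k s.+1) (backward g' k s.+1).
nra.
Qed.

Lemma quad0_ge0 s : 0 <= quad 0 s.
Proof.
have Qtop01 := Qa_bounds top; have := qa_gt0; have := qb_ge0.
have : 0 <= al * E top by rewrite mulr_ge0 ?Ea_ge0 ?(ltW al_gt0).
have : 0 <= s%:R :> R by [].
rewrite /quad /qc subr0 => s_ge0 alE_ge0 qb0 qa0.
rewrite addr_ge0 ?divr_ge0 ?(ltW Qa_top_gt0) //; first by have := sqr_ge0 (s%:R : R); nra.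
by have := Qtop01; nra.
Qed.

Lemma backward_ge0 k s : 0 <= backward 0 k s.
Proof.
elim: k s => [|k IH] s /=; first exact: quad0_ge0.
rewrite subr0 addr_ge0 ?(mulr_ge0 (ltW D_gt0)) ?sqr_ge0 //.
by apply: envelope_ge0 => //; [apply: Qa_bounds | apply: (ltW al_gt0) | apply: Ea_ge0].
Qed.

Lemma backward_le_quad g k s : backward g k s <= quad g s.
Proof.
elim: k s => [//|k IH] s /=; rewrite [leRHS]quadE lerD2l.
apply: le_trans (envelope_le _ _ _ _ top _) _.
by apply: line_le2r; [apply: Qa_bounds | apply: IH].
Qed.

Lemma exists_bellman_root : exists2 g, g <= gmax & yval g 1%N = 0.
Proof.
pose G g := yval g 1%N.
have G_cont : continuous G.
  apply: (@lipschitz_continuous _ _ ((horizon - 1)%:R + (Q top)^-1)).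
    by rewrite ltr_wpDl // invr_gt0 Qa_top_gt0.
  by move=> x y; apply: backward_lipschitz.
have gmax_ge0 : 0 <= gmax.
  rewrite /gmax addr_ge0 ?qb_ge0 // addr_ge0 ?(ltW qa_gt0) //.
  by rewrite mulr_ge0 ?Ea_ge0 ?(ltW al_gt0).
have G0 : 0 <= G 0 by apply: backward_ge0.
have Ggmax : G gmax <= 0 by rewrite -quad_gmax1; apply: backward_le_quad.
have [|g] := @IVT R G 0 gmax 0 gmax_ge0 (continuous_subspaceT G_cont).
  by rewrite ge_min le_max G0 Ggmax orbT.
by rewrite in_itv /= => /andP[_ g_le] Gg; exists g.
Qed.

Definition relval g s := yval g s - D * (s%:R ^+ 2 - 1).

Lemma relval_bounds g : g <= gmax ->
  exists hmin C, forall s, hmin <= relval g s <= (qa + qb) * s%:R ^+ 2 + C.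
Proof.
move=> g_le; pose up s := (qa + qb) * s%:R ^+ 2 + (`|qc g| + D).
have up_ge0 s : 0 <= up s.
  by rewrite addr_ge0 ?mulr_ge0 ?sqr_ge0 ?addr_ge0 ?qb_ge0 ?(ltW qa_gt0) ?(ltW D_gt0).
have tail s : (horizon <= s)%N -> qc g <= relval g s <= up s.
  move=> s_ge; rewrite /relval /up yval_tail // /quad.
  have := D_le_qa; have := qb_ge0; have := D_gt0; have := ler_norm (qc g).
  have := natr_le_sqr R s.
  by have : 0 <= s%:R :> R by []; nra.
have [hmin [M bd]] := bounds_from_tail up_ge0 tail.
by exists hmin, (`|qc g| + D + M) => s; rewrite addrA; apply: bd.
Qed.

(* The quadratic growth of the relative value is dominated by the running
   cost, whose quadratic part is [D (1 - Q a) (s + 1)^2]. *)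
Lemma continuation_le_cost (h : nat -> R) Cq C : 0 <= Cq -> h 1%N = 0 ->
  (forall s, h s <= Cq * s%:R ^+ 2 + C) ->
  forall s a, Q a * h 1%N + (1 - Q a) * h s.+1 <= Cq / D * u s a + `|C|.
Proof.
move=> Cq_ge0 h1 h_le s a; rewrite h1 mulr0 add0r.
have /andP[Q_ge0 Q_le1] := Qa_bounds a.
apply: le_trans (ler_wpM2l _ (h_le s.+1)) _; first by rewrite subr_ge0.
rewrite mulrDr mulrCA; apply: lerD.
  rewrite -[Cq / D * _]mulrA ler_wpM2l // ler_pdivlMl ?D_gt0 //.
  exact: ucost_ge.
by have := normr_ge0 C; have := ler_norm C; nra.
Qed.

Lemma relval1 g : yval g 1%N = 0 -> relval g 1%N = 0.
Proof. by move=> y1; rewrite /relval y1 expr1n subrr mulr0 subrr. Qed.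

Lemma bellman_relval_rhs g s a : yval g 1%N = 0 ->
  u s a + Q a * relval g 1%N + (1 - Q a) * relval g s.+1 = v a (yval g s.+1) + D.
Proof. by move=> y1; rewrite relval1 // /relval ucostE /line -natr1; ring. Qed.

Lemma bellman_relval_lhs g s : g <= gmax -> g + relval g s = m (yval g s.+1) + D.
Proof. by move=> g_le; rewrite /relval (yvalE s g_le); ring. Qed.

Lemma exists_optimal_threshold_policy :
  exists (phi : nat -> act) (K : nat) (b : nat -> act) (th : nat -> nat),
    [/\ threshold_with phi K b th, optimal p c r beta eps phi &
        forall k, (1 <= k < K)%N ->
          Q (b k) < Q (b k.+1) /\
          forall a, Q (b k) < Q a -> gamma p c r (b k) (b k.+1) <= gamma p c r (b k) a].
Proof.
have [g g_le y1] := exists_bellman_root.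
have y_nd : nondecreasing_seq (yval g).
  by apply/nondecreasing_seqP => s; apply: yval_le_succ.
have y_unb := yval_unbounded g_le.
have al_ge0 := ltW al_gt0.
exists (chain_policy p c r al (yval g)), (top_index p c r al (yval g)).+1.
exists (fun k => chain p c r al (yval g) k.-1), (switch_state p c r al y_unb).
split; [exact: chain_policy_threshold | | exact: chain_gamma].
have [hmin [C h_bd]] := relval_bounds g_le.
have K_gt0 : 0 < (qa + qb) / D by rewrite divr_gt0 ?ltr_wpDr ?qb_ge0 ?qa_gt0 ?D_gt0.
have h_ge s : hmin <= relval g s by case/andP: (h_bd s).
have sub s a : g + relval g s <= u s a + Q a * relval g 1%N + (1 - Q a) * relval g s.+1.
  by rewrite bellman_relval_lhs // bellman_relval_rhs // lerD2r envelope_le.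
have opt s : (1 <= s)%N -> g + relval g s = u s (chain_policy p c r al (yval g) s)
    + Q (chain_policy p c r al (yval g) s) * relval g 1%N
    + (1 - Q (chain_policy p c r al (yval g) s)) * relval g s.+1.
  move=> s_ge1; rewrite bellman_relval_lhs // bellman_relval_rhs //; congr (_ + _).
  apply: le_anti; apply/andP; split; first exact: envelope_le.
  exact: (chain_policy_minimal c al_ge0 Qinj y_nd s_ge1 (argmin_line p c r al _)).
have cont := continuation_le_cost (h := relval g) (addr_ge0 (ltW qa_gt0) qb_ge0)
  (relval1 y1) (fun s => proj2 (andP (h_bd s))).
exact: (optimal_of_bellman (C := `|C|) Qa_bounds K_gt0 h_ge sub opt cont).
Qed.

End OptimalThresholdPolicy.

Theorem proposition2 (R : realType) (N : nat) (p c r : 'I_N -> R) (beta eps : R) :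
  (0 < N)%N ->
  (forall n, 0 < p n <= 1) ->
  (forall n, 0 <= c n) ->
  (forall n, 0 < r n <= 1) ->
  0 < beta < 1 ->
  0 < eps ->
  injective (Qa p r) ->
  exists (phi : nat -> {set 'I_N}) (K : nat) (b : nat -> {set 'I_N}) (th : nat -> nat),
    [/\ threshold_with phi K b th,
        optimal p c r beta eps phi &
        forall k, (1 <= k < K)%N ->
          Qa p r (b k) < Qa p r (b k.+1) /\
          forall a : {set 'I_N}, Qa p r (b k) < Qa p r a ->
            gamma p c r (b k) (b k.+1) <= gamma p c r (b k) a].
Proof. exact: exists_optimal_threshold_policy. Qed.
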